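(* Let $\widehat H:[0,T]\times\mathbb{R}^n\times\mathbb{R}^n\to\mathbb{R}$ and $\widehat\sigma:\mathbb{R}^n\to\mathbb{R}$ be such that $H(t,x(\cdot),s)=\widehat H(t,x(t),s)$ and $\sigma(x(\cdot))=\widehat\sigma(x(T))$ satisfy (B.1), (B.2), (B.3), with $c$ the constant of (B.2). Let $\widehat\varphi:[0,T]\times\mathbb{R}^n\to\mathbb{R}$ be a continuous function with $\widehat\varphi(T,x)=\widehat\sigma(x)$ for all $x\in\mathbb{R}^n$ and the property: for every $(t,x)\in[0,T)\times\mathbb{R}^n$ and $s\in\mathbb{R}^n$ there is a Lipschitz $y:[t,T]\to\mathbb{R}^n$ with $y(t)=x$, $\|\dot y(\tau)\|\le c(1+\|y(\tau)\|)$ for a.e. $\tau\in[t,T]$, and $\widehat\varphi(\tau,y(\tau))-\widehat\varphi(t,x)=\langle s,y(\tau)-x\rangle-\int_t^\tau\widehat H(\xi,y(\xi),s)\,d\xi$ for all $\tau\in[t,T]$ (i.e. $\widehat\varphi$ is the minimax solution of $\partial_t\widehat\varphi+\widehat H(t,x,\nabla_x\widehat\varphi)=0$, $\widehat\varphi(T,\cdot)=\widehat\sigma$). Then the minimax solution of the path-dependent problem $\partial_t\varphi+H(t,x(\cdot),\nabla\varphi)=0$, $\varphi(T,x(\cdot))=\sigma(x(\cdot))$ coincides with the functional $\varphi(t,x(\cdot))=\widehat\varphi(t,x(t))$, $(t,x(\cdot))\in[0,T]\times C([-h,T],\mathbb{R}^n)$.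
   Context: Fix $n\in\mathbb{N}$, $h>0$, $T>0$; $\langle\cdot,\cdot\rangle$, $\|\cdot\|$ Euclidean. $C([-h,T],\mathbb{R}^n)$ has the sup norm $\|\cdot\|_{[-h,T]}$; $[0,T]\times C([-h,T],\mathbb{R}^n)$ has the metric $|t-\tau|+\|x(\cdot)-y(\cdot)\|_{[-h,T]}$. Non-anticipative: $\varphi(t,x(\cdot))=\varphi(t,y(\cdot))$ whenever $t\in[0,T)$ and $x=y$ on $[-h,t]$. $\mathrm{Lip}(t,x(\cdot))$: the $y(\cdot)\in C([-h,T],\mathbb{R}^n)$ with $y=x$ on $[-h,t]$, Lipschitz on $[t,T]$. (B.1) $H,\sigma$ continuous; (B.2) there is $c>0$ with $|H(t,x(\cdot),s)-H(t,x(\cdot),r)|\le c(1+\max_{\tau\in[-h,t]}\|x(\tau)\|)\|s-r\|$ for all $t,x(\cdot),s,r$; (B.3) for every compact $D\subset C([-h,T],\mathbb{R}^n)$ there is $\lambda>0$ with $|H(t,x(\cdot),s)-H(t,y(\cdot),s)|\le\lambda(1+\|s\|)\max_{\tau\in[-h,t]}\|x(\tau)-y(\tau)\|$ for all $t\in[0,T]$, $x(\cdot),y(\cdot)\in D$, $s$. $Y(t,x(\cdot))$: the $y(\cdot)\in\mathrm{Lip}(t,x(\cdot))$ with $\|\dot y(\tau)\|\le c(1+\max_{\xi\in[-h,\tau]}\|y(\xi)\|)$ for a.e. $\tau\in[t,T]$. A minimax solution: $\varphi$ non-anticipative, continuous, $\varphi(T,\cdot)=\sigma$, and for every $(t,x(\cdot))\in[0,T)\times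 C([-h,T],\mathbb{R}^n)$, $s\in\mathbb{R}^n$ there is $y(\cdot)\in Y(t,x(\cdot))$ with $\varphi(\tau,y(\cdot))-\varphi(t,x(\cdot))=\langle s,y(\tau)-x(t)\rangle-\int_t^\tau H(\xi,y(\cdot),s)\,d\xi$ for all $\tau\in[t,T]$. Under (B.1)–(B.3) it exists and is unique. *)

From HB Require Import structures.
From mathcomp Require Import all_boot all_order all_algebra.
From mathcomp Require Import all_classical all_reals all_analysis.
Set Implicit Arguments. Unset Strict Implicit. Unset Printing Implicit Defensive.
Import Order.TTheory GRing.Theory Num.Theory.
Import numFieldNormedType.Exports.
Local Open Scope classical_set_scope.
Local Open Scope ring_scope.

Section Defs.
Variables (R : realType) (n : nat).

Notation vec := 'rV[R]_n.
(* paths: functions R -> R^n, only their restriction to [-h,T] matters *)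
Notation path := (R -> vec).

Definition dotp (u v : vec) : R := \sum_(i < n) u ord0 i * v ord0 i.
Definition enorm (u : vec) : R := Num.sqrt (dotp u u).

(* max_{xi in [a,b]} ||x(xi)|| (a maximum for continuous x, written as sup) *)
Definition pmax (x : path) (a b : R) : R :=
  sup [set enorm (x xi) | xi in `[a, b]].

Definition isC (h T : R) (x : path) : Prop := {within `[- h, T], continuous x}.

Definition cont_functional (h T : R) (phi : R -> path -> R) : Prop :=
  forall t x, t \in `[0, T] -> isC h T x ->
  forall eps : R, 0 < eps -> exists2 del : R, 0 < del &
    forall t' y, t' \in `[0, T] -> isC h T y ->
      `|t - t'| + pmax (fun xi => x xi - y xi) (- h) T < del ->
      `|phi t x - phi t' y| < eps.

Definition cont_H (h T : R) (H : R -> path -> vec -> R) : Prop :=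
  forall t x s, t \in `[0, T] -> isC h T x ->
  forall eps : R, 0 < eps -> exists2 del : R, 0 < del &
    forall t' y r, t' \in `[0, T] -> isC h T y ->
      `|t - t'| + pmax (fun xi => x xi - y xi) (- h) T + enorm (s - r) < del ->
      `|H t x s - H t' y r| < eps.

Definition cont_sigma (h T : R) (sigma : path -> R) : Prop :=
  forall x, isC h T x ->
  forall eps : R, 0 < eps -> exists2 del : R, 0 < del &
    forall y, isC h T y -> pmax (fun xi => x xi - y xi) (- h) T < del ->
      `|sigma x - sigma y| < eps.

Definition B1 (h T : R) H sigma := cont_H h T H /\ cont_sigma h T sigma.

Definition B2 (h T : R) (H : R -> path -> vec -> R) (c : R) : Prop :=
  forall t x s r, t \in `[0, T] -> isC h T x ->
    `|H t x s - H t x r| <= c * (1 + pmax x (- h) t) * enorm (s - r).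

(* compactness of D in C([-h,T],R^n) with the sup norm: compact subset of the
   space of functions with the topology of uniform convergence on [-h,T] *)
Definition B3 (h T : R) (H : R -> path -> vec -> R) : Prop :=
  forall D : set path, D `<=` isC h T ->
    compact (D : set {uniform` `[- h, T] -> vec}) ->
    exists2 lam : R, 0 < lam &
      forall t x y s, t \in `[0, T] -> D x -> D y ->
        `|H t x s - H t y s| <=
          lam * (1 + enorm s) * pmax (fun xi => x xi - y xi) (- h) t.

Definition nonanticipative (h T : R) (phi : R -> path -> R) : Prop :=
  forall t x y, t \in `[0, T[ -> isC h T x -> isC h T y ->
    {in `[- h, t], x =1 y} -> phi t x = phi t y.

Definition Lip (h T t : R) (x y : path) : Prop :=
  isC h T y /\ {in `[- h, t], y =1 x} /\
  exists L : R, forall a b, a \in `[t, T] -> b \in `[t, T] ->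
    enorm (y a - y b) <= L * `|a - b|.

Definition Yset (h T c t : R) (x y : path) : Prop :=
  Lip h T t x y /\
  {ae (@lebesgue_measure R), forall tau, tau \in `[t, T] ->
     derivable y tau 1 /\ enorm ('D_1 y tau) <= c * (1 + pmax y (- h) tau)}.

Definition minimax (h T c : R) (H : R -> path -> vec -> R) (sigma : path -> R)
  (phi : R -> path -> R) : Prop :=
  [/\ nonanticipative h T phi, cont_functional h T phi,
      (forall x, isC h T x -> phi T x = sigma x) &
      forall t x s, t \in `[0, T[ -> isC h T x ->
        exists2 y, Yset h T c t x y &
          forall tau, tau \in `[t, T] ->
            phi tau y - phi t x =
              dotp s (y tau - x t) - Rintegral (@lebesgue_measure R) `[t, tau]
                                       (fun xi => H xi y s)].

Definition minimax_hat (T c : R) (Hh : R -> vec -> vec -> R) (sigh : vec -> R)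
  (phih : R -> vec -> R) : Prop :=
  [/\ {within `[0, T] `*` [set: vec], continuous (fun p : R * vec => phih p.1 p.2)},
      (forall x, phih T x = sigh x) &
      forall t x s, t \in `[0, T[ ->
        exists y : R -> vec,
          [/\ (exists L : R, forall a b, a \in `[t, T] -> b \in `[t, T] ->
                 enorm (y a - y b) <= L * `|a - b|),
              y t = x,
              {ae (@lebesgue_measure R), forall tau, tau \in `[t, T] ->
                 derivable y tau 1 /\ enorm ('D_1 y tau) <= c * (1 + enorm (y tau))} &
              forall tau, tau \in `[t, T] ->
                phih tau (y tau) - phih t x =
                  dotp s (y tau - x) - Rintegral (@lebesgue_measure R) `[t, tau]
                                         (fun xi => Hh xi (y xi) s)]].

End Defs.

From HB Require Import structures.
From mathcomp Require Import all_boot all_order all_algebra.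
From mathcomp Require Import all_classical all_reals all_analysis.
From mathcomp Require Import lra.
Set Implicit Arguments. Unset Strict Implicit. Unset Printing Implicit Defensive.
Import Order.TTheory GRing.Theory Num.Theory.
Import numFieldNormedType.Exports.
Local Open Scope classical_set_scope.
Local Open Scope ring_scope.

(* Continuity of the lift
   on [0,T] x C([-h,T],R^n) follows from the continuity of phih, of x at t, and
   the bound |x(t') - y(t')| <= ||x - y||_[-h,T].  For the characteristic
   inclusion at (t, x(.)) we take the finite-dimensional characteristic y
   issued from x(t) and concatenate it with x: the path equal to x on [-h,t]
   and to y on [t,T] is continuous (pasting lemma), Lipschitz on [t,T], and
   agrees with y near every tau in (t,T], so it inherits the a.e. derivative
   bound of y, the norm of y(tau) being dominated by the running maximum. *)

Lemma cont_within_eps (K : numFieldType) (U V : normedModType K) (A : set U)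
    (f : U -> V) :
  {within A, continuous f} <->
  forall x, A x -> forall e, 0 < e -> exists2 d, 0 < d &
    forall y, A y -> `|x - y| < d -> `|f x - f y| < e.
Proof.
split=> [/subspace_continuousP cf x Ax e e0 | cf].
  have /cvgrPdist_lt/(_ e e0) := cf x Ax.
  rewrite near_withinE => /nbhs_normP[d d0 fd].
  by exists d => // y Ay xy; exact: fd.
apply/subspace_continuousP => x Ax; apply/cvgrPdist_lt => e e0.
rewrite near_withinE; apply/nbhs_normP.
by have [d d0 fd] := cf x Ax e e0; exists d => //= y xy Ay; exact: fd.
Qed.
Arguments cont_within_eps {K U V A f}.

Section EuclideanNorm.
Variables (R : realType) (n : nat).
Implicit Types (u : 'rV[R]_n) (f : R -> 'rV[R]_n).

Lemma dotp_ge0 u : 0 <= dotp u u.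
Proof. by apply: sumr_ge0 => i _; rewrite -expr2 sqr_ge0. Qed.

Lemma enorm_ge0 u : 0 <= enorm u.
Proof. exact: sqrtr_ge0. Qed.

Lemma norm_le_enorm u : `|u| <= enorm u.
Proof.
rewrite -[X in X <= _]/(mx_norm u) mx_normrE.
apply: bigmax_le => [|[i j] _ /=]; first exact: enorm_ge0.
rewrite (ord1 i) /enorm -(sqrtr_sqr (u ord0 j)) ler_sqrt; last exact: dotp_ge0.
rewrite /dotp (bigD1 j) //= -expr2 lerDl.
by apply: sumr_ge0 => k _; rewrite -expr2 sqr_ge0.
Qed.

Lemma enorm_le_sqrt u M : `|u| <= M -> enorm u <= Num.sqrt (n%:R * M ^+ 2).
Proof.
move=> uM; rewrite /enorm ler_wsqrtr // /dotp.
rewrite mulr_natl -[n in _ *+ n]card_ord -sumr_const.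
apply: ler_sum => i _; rewrite -expr2 -real_normK ?num_real //.
have uiM : `|u ord0 i| <= M.
  apply: le_trans uM; rewrite -[X in _ <= X]/(mx_norm u) mx_normrE.
  exact: (le_bigmax _ _ (ord0, i)).
by rewrite lerXn2r ?nnegrE //; exact: le_trans uiM.
Qed.

(* On a segment where f is continuous, its values are bounded, so pmax is a
   genuine upper bound of the norms enorm (f xi). *)
Lemma pmax_ub f a b xi :
  {within `[a, b], continuous f} -> xi \in `[a, b] -> enorm (f xi) <= pmax f a b.
Proof.
move=> cf xiab.
have [M [_ fM]] := compact_bounded (continuous_compact cf (@segment_compact _ a b)).
apply: ub_le_sup; last by exists xi.
exists (Num.sqrt (n%:R * (M + 1) ^+ 2)) => _ [z zab <-].
by apply: enorm_le_sqrt; apply: (fM (M + 1)); [rewrite ltrDl | exists z].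
Qed.

Lemma pmax_ge0 f a b :
  a <= b -> {within `[a, b], continuous f} -> 0 <= pmax f a b.
Proof.
move=> ab cf; apply: le_trans (enorm_ge0 (f a)) _; apply: pmax_ub cf _.
by rewrite in_itv /= lexx ab.
Qed.

End EuclideanNorm.

Section Paths.
Variables (R : realType) (n : nat) (h T : R).
Implicit Types (x y : R -> 'rV[R]_n).

Lemma isCB x y : isC h T x -> isC h T y -> isC h T (fun xi => x xi - y xi).
Proof.
move=> /subspace_continuousP cx /subspace_continuousP cy.
by apply/subspace_continuousP => z hz; exact: cvgB (cx z hz) (cy z hz).
Qed.

Lemma pmax_dist x y t : isC h T x -> isC h T y -> t \in `[- h, T] ->
  `|x t - y t| <= pmax (fun xi => x xi - y xi) (- h) T.
Proof.
move=> cx cy ht; apply: le_trans (norm_le_enorm _) _.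
exact: pmax_ub (isCB cx cy) ht.
Qed.

End Paths.

Section Lifting.
Variables (R : realType) (n : nat) (h T : R) (phih : R -> 'rV[R]_n -> R).
Hypothesis h_ge0 : 0 <= h.

Let lift (t : R) (x : R -> 'rV[R]_n) := phih t (x t).

Lemma lift_nonanticipative : nonanticipative h T lift.
Proof.
move=> t x y; rewrite in_itv /= => /andP[t0 _] _ _ xy.
by rewrite /lift xy // in_itv /= lexx andbT (le_trans _ t0) // oppr_le0.
Qed.

Lemma lift_continuous :
  {within `[0, T] `*` [set: 'rV[R]_n], continuous (fun p => phih p.1 p.2)} ->
  cont_functional h T lift.
Proof.
move=> cphi t x tT cx e e0.
have in_hT s : s \in `[0, T] -> s \in `[- h, T].
  by rewrite !in_itv /= => /andP[s0 ->]; rewrite andbT (le_trans _ s0) // oppr_le0.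
have hT : - h <= T by move: (in_hT t tT); rewrite in_itv /= => /andP[htt /(le_trans htt)].
have [e1 e10 phi_e1] := cont_within_eps.1 cphi (t, x t) (conj tT I) e e0.
have e12 : 0 < e1 / 2 by rewrite divr_gt0.
have [d d0 x_d] := cont_within_eps.1 cx t (in_hT t tT) (e1 / 2) e12.
exists (Num.min d (e1 / 2)); first by rewrite lt_min d0 e12.
move=> t' y t'T cy; rewrite lt_min => /andP[dt dp].
have tt0 := normr_ge0 (t - t').
have p0 := pmax_ge0 hT (isCB cx cy).
have xy_t' := pmax_dist cx cy (in_hT t' t'T).
have x_tt' : `|x t - x t'| < e1 / 2 by apply: x_d (in_hT t' t'T) _; lra.
apply: (phi_e1 (t', y t')); first by split.
rewrite prod_normE /= gt_max; apply/andP; split; first lra.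
have -> : x t - y t' = (x t - x t') + (x t' - y t') by rewrite addrA subrK.
by apply: le_lt_trans (ler_normD _ _) _; lra.
Qed.

End Lifting.

Lemma lipschitz_within_continuous (R : realType) (n : nat) (A : set R)
    (y : R -> 'rV[R]_n) (L : R) :
  (forall a b, A a -> A b -> enorm (y a - y b) <= L * `|a - b|) ->
  {within A, continuous y}.
Proof.
move=> yL; apply/cont_within_eps => a Aa e e0.
have L1 : 0 < `|L| + 1 by rewrite ltr_pwDr.
exists (e / (`|L| + 1)); first by rewrite divr_gt0.
move=> b Ab; rewrite ltr_pdivlMr // => ab.
apply: le_lt_trans (norm_le_enorm _) _; apply: le_lt_trans (yL a b Aa Ab) _.
apply: le_lt_trans ab; rewrite mulrC ler_wpM2l //.
by apply: le_trans (ler_norm L) _; rewrite lerDl.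
Qed.

Lemma itv_glue (R : realType) (a t b : R) : a <= t -> t <= b ->
  `[a, b]%classic = `[a, t] `|` `[t, b] :> set R.
Proof.
move=> ha hb; apply/seteqP; split => z /=; rewrite !in_itv /=.
  case/andP=> az zb; case: (leP z t) => zt; [left|right]; apply/andP; split=> //.
  exact: ltW.
by case=> /andP[az zb]; apply/andP; split=> //;
  [exact: le_trans hb | exact: le_trans ha _].
Qed.

Section Concatenation.
Variables (R : realType) (n : nat) (h T t : R) (x y : R -> 'rV[R]_n).
Hypotheses (ht : - h <= t) (tT : t <= T) (yx : y t = x t).

Definition concat : R -> 'rV[R]_n := fun xi => if xi <= t then x xi else y xi.

Lemma concat_le xi : xi <= t -> concat xi = x xi.
Proof. by rewrite /concat => ->. Qed.

Lemma concat_ge xi : t <= xi -> concat xi = y xi.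
Proof.
rewrite /concat => txi; case: ifP => // xit.
by have -> : xi = t by apply/le_anti; rewrite xit txi.
Qed.

Lemma concat_isC : isC h T x -> {within `[t, T], continuous y} -> isC h T concat.
Proof.
move=> cx cy; rewrite /isC (itv_glue ht tT).
apply: withinU_continuous; try exact: interval_closed.
  apply: subspace_eq_continuous (continuous_subspaceW _ cx).
    by move=> xi; rewrite inE /= in_itv /= => /andP[_ /concat_le].
  by move=> xi; rewrite /= !in_itv /= => /andP[-> xit]; exact: le_trans tT.
apply: subspace_eq_continuous cy.
by move=> xi; rewrite inE /= in_itv /= => /andP[/concat_ge].
Qed.

Lemma concat_near xi : t < xi -> \forall z \near xi, concat z = y z.
Proof.
move=> txi; apply/nbhs_normP; exists (xi - t); first by rewrite /= subr_gt0.
move=> z /= xz; apply: concat_ge; have := ler_norm (xi - z); lra.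
Qed.

Lemma concat_derivative (c : R) : 0 <= c -> isC h T concat ->
  {ae @lebesgue_measure R, forall tau, tau \in `[t, T] ->
     derivable y tau 1 /\ enorm ('D_1 y tau) <= c * (1 + enorm (y tau))} ->
  {ae @lebesgue_measure R, forall tau, tau \in `[t, T] ->
     derivable concat tau 1 /\
     enorm ('D_1 concat tau) <= c * (1 + pmax concat (- h) tau)}.
Proof.
move=> c0 cC ae_y.
have ae_ne : {ae @lebesgue_measure R, forall tau, tau != t}.
  exists [set t]; split; [exact: measurable_set1 | exact: lebesgue_measure_set1 |].
  by move=> z /= /negP; rewrite negbK => /eqP.
apply: (filterS2 (F := almost_everywhere (@lebesgue_measure R)) _ _ ae_y ae_ne)
  => tau y_tau tau_t tauT.
have [dy ybd] := y_tau tauT.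
move: tauT; rewrite in_itv /= => /andP[ttau tauT].
have near_y : \forall z \near tau, concat z = y z.
  by apply: concat_near; rewrite lt_neqAle eq_sym tau_t ttau.
split; first exact: near_eq_derivable (filterS (fun _ => esym) near_y) dy.
rewrite (near_eq_derive _ near_y); apply: le_trans ybd _.
rewrite ler_wpM2l // lerD2l -(concat_ge ttau); apply: pmax_ub.
  by apply: continuous_subspaceW cC => z /=; rewrite !in_itv /= => /andP[-> /le_trans->].
by rewrite in_itv /= lexx andbT (le_trans ht ttau).
Qed.

Lemma concat_Yset (c L : R) : 0 <= c -> isC h T x ->
  (forall a b, a \in `[t, T] -> b \in `[t, T] -> enorm (y a - y b) <= L * `|a - b|) ->
  {ae @lebesgue_measure R, forall tau, tau \in `[t, T] ->
     derivable y tau 1 /\ enorm ('D_1 y tau) <= c * (1 + enorm (y tau))} ->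
  Yset h T c t x concat.
Proof.
move=> c0 cx yL ae_y.
have cC := concat_isC cx (lipschitz_within_continuous (A := `[t, T]) yL).
split; last exact: concat_derivative.
split=> //; split=> [xi | ].
  by rewrite in_itv /= => /andP[_ /concat_le].
exists L => a b ta tb; rewrite !concat_ge ?yL //.
  by move: tb; rewrite in_itv /= => /andP[].
by move: ta; rewrite in_itv /= => /andP[].
Qed.

End Concatenation.

Theorem proposition8 (R : realType) (n : nat) (h T c : R)
  (Hh : R -> 'rV[R]_n -> 'rV[R]_n -> R) (sigh : 'rV[R]_n -> R)
  (phih : R -> 'rV[R]_n -> R) :
  0 < h -> 0 < T -> 0 < c ->
  let H := fun (t : R) (x : R -> 'rV[R]_n) (s : 'rV[R]_n) => Hh t (x t) s in
  let sigma := fun x : R -> 'rV[R]_n => sigh (x T) in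
  B1 h T H sigma -> B2 h T H c -> B3 h T H ->
  minimax_hat T c Hh sigh phih ->
  minimax h T c H sigma (fun (t : R) (x : R -> 'rV[R]_n) => phih t (x t)).
Proof.
move=> h0 _ c0 H sigma _ _ _ [cphi phiT characteristic].
split; [exact: lift_nonanticipative (ltW h0) | exact: lift_continuous (ltW h0) cphi |
       by move=> x _; rewrite phiT |].
move=> t x s tT cx.
have [y [[L yL] yt ae_y eq_y]] := characteristic t (x t) s tT.
move: tT; rewrite in_itv /= => /andP[t0 tT].
have ht : - h <= t by apply: le_trans t0; rewrite oppr_le0 ltW.
have Y_ok := concat_Yset ht (ltW tT) yt (ltW c0) cx yL ae_y.
exists (concat t x y) => // tau; rewrite in_itv /= => /andP[ttau tauT].
rewrite /= concat_ge // eq_y ?in_itv /= ?ttau //; congr (_ - _).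
apply: eq_Rintegral => xi; rewrite inE /= in_itv /= => /andP[txi _].
by rewrite /H concat_ge.
Qed.
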